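(* Let $p$ be a state. The interior of $p^{TP}=\{Tp:T\in TP(d)\}$, taken relative to the affine hyperplane $\{x\in\mathbb{R}^d:\sum_i x_i=1\}$, consists exactly of the states $r$ such that every elbow $(x,y)$ of $\beta(r)$ lies strictly below $\beta(p)$, i.e. $y<\beta(p)(x)$.
   Context: Fix $d\ge 2$, $\beta\in(0,\infty)$ and pairwise distinct reals $E_0=0,E_1,\dots,E_{d-1}$. Put $q_{m,n}=e^{-\beta(E_m-E_n)}$, $Z=\sum_j q_{j,0}$, $g_i=q_{i,0}/Z$. A state is a probability vector in $\mathbb{R}^d$. $TP(d)$ is the set of $d\times d$ real matrices with non-negative entries, columns summing to $1$, and $Tg=g$. For a state $p$ choose a permutation $\pi$ of $\{0,\dots,d-1\}$ with $p_{\pi(0)}/g_{\pi(0)}\ge\dots\ge p_{\pi(d-1)}/g_{\pi(d-1)}$; let $x_k=\sum_{i\le k}g_{\pi(i)}$, $y_k=\sum_{i\le k}p_{\pi(i)}$. The thermomajorization curve $\beta(p)$ is the graph of the concave piecewise-linear function $\beta(p)(\cdot)$ on $[0,1]$ through $(0,0),(x_0,y_0),\dots,(x_{d-1},y_{d-1})=(1,1)$. The elbows of $\beta(p)$ are the points $(x_k,y_k)$ for $k=0,\dots,d-2$. *)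

From HB Require Import structures.
From mathcomp Require Import all_boot all_order all_algebra all_fingroup.
From mathcomp Require Import all_classical all_reals all_analysis.
Set Implicit Arguments. Unset Strict Implicit. Unset Printing Implicit Defensive.
Import Order.TTheory GRing.Theory Num.Theory.
Local Open Scope ring_scope.

Section TM.
Variables (R : realType) (d : nat).

Definition qfac (beta : R) (E : 'I_d -> R) (m n : 'I_d) : R :=
  expR (- beta * (E m - E n)).

(* Gibbs state g_i = q_{i,0}/Z, Z = sum_j q_{j,0}; the index 0 is [i0]. *)
Definition gibbs (beta : R) (E : 'I_d -> R) (i0 : 'I_d) (i : 'I_d) : R :=
  qfac beta E i i0 / \sum_(j < d) qfac beta E j i0.

Definition isState (p : 'cV[R]_d) : Prop :=
  (forall i, 0 <= p i 0) /\ \sum_(i < d) p i 0 = 1.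

Definition gibbsV beta E i0 : 'cV[R]_d := \col_i gibbs beta E i0 i.

Definition isTP beta E i0 (T : 'M[R]_d) : Prop :=
  (forall i j, 0 <= T i j) /\ (forall j, \sum_(i < d) T i j = 1) /\
  T *m gibbsV beta E i0 = gibbsV beta E i0.

Definition TPorbit beta E i0 (p : 'cV[R]_d) : set 'cV[R]_d :=
  [set r | exists T, isTP beta E i0 T /\ r = T *m p].

Definition rel_interior (S : set 'cV[R]_d) (r : 'cV[R]_d) : Prop :=
  \sum_(i < d) r i 0 = 1 /\
  exists2 eps : R, 0 < eps & forall x : 'cV[R]_d, \sum_(i < d) x i 0 = 1 ->
    (forall i, `|x i 0 - r i 0| < eps) -> S x.

Definition sorting beta E i0 (p : 'cV[R]_d) (pi : {perm 'I_d}) : Prop :=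
  forall i j : 'I_d, (i <= j)%N ->
    p (pi j) 0 / gibbs beta E i0 (pi j) <= p (pi i) 0 / gibbs beta E i0 (pi i).

Definition xcum beta E i0 (pi : {perm 'I_d}) (k : nat) : R :=
  \sum_(i < d | (i <= k)%N) gibbs beta E i0 (pi i).
Definition ycum (p : 'cV[R]_d) (pi : {perm 'I_d}) (k : nat) : R :=
  \sum_(i < d | (i <= k)%N) p (pi i) 0.
(* x_{k-1}, with x_{-1} = 0 *)
Definition xprev beta E i0 (pi : {perm 'I_d}) (k : nat) : R :=
  \sum_(i < d | (i < k)%N) gibbs beta E i0 (pi i).

Definition clamp01 (t : R) : R := Num.min 1 (Num.max 0 t).

(* beta(p)(x) for x in [0,1]: the piecewise-linear interpolation through
   (0,0),(x_0,y_0),...,(x_{d-1},y_{d-1}).  On [x_{k-1},x_k] it equals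
   y_{k-1} + p_{pi k} (x - x_{k-1}) / g_{pi k}, the slope being
   (y_k-y_{k-1})/(x_k-x_{k-1}). *)
Definition tmcurve beta E i0 (p : 'cV[R]_d) (pi : {perm 'I_d}) (x : R) : R :=
  \sum_(k < d) p (pi k) 0 *
     clamp01 ((x - xprev beta E i0 pi k) / gibbs beta E i0 (pi k)).

End TM.

From HB Require Import structures.
From mathcomp Require Import all_boot all_order all_algebra all_fingroup.
From mathcomp Require Import all_classical all_reals all_analysis.
From mathcomp Require Import ring lra zify.
Set Implicit Arguments. Unset Strict Implicit. Unset Printing Implicit Defensive.
Import Order.TTheory GRing.Theory Num.Theory.
Local Open Scope ring_scope.

(* A thermal process cannot raise any prefix sum of a state above the
   thermomajorization curve of [p] (a fractional knapsack bound), while for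
   each ordering of the levels an extremal process puts the prefix sums along
   that ordering exactly on the curve.  By Farkas' lemma and Abel summation, a
   state with all its prefix sums below the curve is therefore in the orbit.
   If [r] is interior, shifting a little mass to the front of any ordering
   stays in the orbit, so the elbows of [r] lie strictly below the curve of
   [p].  Conversely, strict elbows make the concave curve of [p] strictly
   dominate the polygonal curve of [r] on (0, 1); this leaves a uniform margin
   for all prefix sums of all states close to [r]. *)

(** * Farkas' lemma *)

Section Farkas.
Variables (R : realFieldType) (I : finType).

Definition dot (c v : I -> R) : R := \sum_i c i * v i.

Lemma dotBr c (u v : I -> R) x y :
  dot c (fun i => x * u i - y * v i) = x * dot c u - y * dot c v.
Proof. by rewrite /dot !mulr_sumr -sumrB; apply: eq_bigr => i _; ring. Qed.

Lemma dotBl (c c' v : I -> R) x :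
  dot (fun i => c i - x * c' i) v = dot c v - x * dot c' v.
Proof. by rewrite /dot mulr_sumr -sumrB; apply: eq_bigr => i _; ring. Qed.

Definition in_cone n (a : 'I_n -> I -> R) (b : I -> R) : Prop :=
  exists2 mu : 'I_n -> R, (forall j, 0 <= mu j) & forall i, b i = \sum_j mu j * a j i.

Definition separated n (a : 'I_n -> I -> R) (b : I -> R) : Prop :=
  exists2 c : I -> R, (forall j, 0 <= dot c (a j)) & dot c b < 0.

Lemma in_cone_tail n (a : 'I_n.+1 -> I -> R) b :
  in_cone (fun j => a (lift ord0 j)) b -> in_cone a b.
Proof.
case=> mu mu_ge0 bE; exists (fun j => if unlift ord0 j is Some j' then mu j' else 0).
  by move=> j; case: unlift.
move=> i; rewrite bE big_ord_recl unlift_none mul0r add0r.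
by apply: eq_bigr => j _; rewrite liftK.
Qed.

(* Projection along [a0] onto the hyperplane [dot c = 0], up to the factor
   [- dot c a0]: the Fourier-Motzkin elimination of the generator [a0]. *)
Definition project (c a0 v : I -> R) (i : I) : R := dot c v * a0 i - dot c a0 * v i.

Section Projection.
Variables (n : nat) (a : 'I_n.+1 -> I -> R) (b : I -> R) (c : I -> R).
Hypothesis c_a0_lt0 : dot c (a ord0) < 0.
Local Notation proj := (project c (a ord0)).

Lemma in_cone_project :
  (forall j, 0 <= dot c (a (lift ord0 j))) -> dot c b < 0 ->
  in_cone (fun j => proj (a (lift ord0 j))) (proj b) -> in_cone a b.
Proof.
move=> c_tail_ge0 cb_lt0 [mu mu_ge0 projbE].
set al := dot c (a ord0); set S := \sum_j mu j * dot c (a (lift ord0 j)).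
have al_lt0 : al < 0 := c_a0_lt0.
have S_ge0 : 0 <= S by apply: sumr_ge0 => j _; apply: mulr_ge0.
exists (fun j => if unlift ord0 j is Some j' then mu j' else (dot c b - S) / al).
  move=> j; case: unlift => [j'|]; first exact: mu_ge0.
  by rewrite -mulrNN -invrN; apply: divr_ge0; lra.
move=> i; rewrite big_ord_recl unlift_none; under eq_bigr do rewrite liftK.
have := projbE i; rewrite /project -/al.
have -> : \sum_j mu j * (dot c (a (lift ord0 j)) * a ord0 i - al * a (lift ord0 j) i) =
          S * a ord0 i - al * \sum_j mu j * a (lift ord0 j) i.
  by rewrite /S mulr_suml mulr_sumr -sumrB; apply: eq_bigr => j _; ring.
set X := \sum_j _ * a (lift ord0 j) i => eq_i.
have al_neq0 : al != 0 := ltr0_neq0 al_lt0.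
have -> : b i = (al * b i) / al by field.
have -> : al * b i = (dot c b - S) * a ord0 i + al * X by lra.
by field.
Qed.

Lemma separated_project :
  separated (fun j => proj (a (lift ord0 j))) (proj b) -> separated a b.
Proof.
case=> c' c'_ge0 c'b_lt0; set al := dot c (a ord0).
have al_lt0 : al < 0 := c_a0_lt0.
pose c'' i := c' i - dot c' (a ord0) / al * c i.
have c''E v : dot c'' v = dot c' (proj v) / - al.
  by rewrite /project dotBr dotBl -/al; field; rewrite ltr0_neq0.
exists c''; last by rewrite c''E ltr_pdivrMr ?mul0r; lra.
move=> j; rewrite c''E; apply: divr_ge0; last by lra.
case: (unliftP ord0 j) => [j' ->|->]; first exact: c'_ge0.
by rewrite /dot big1 // => i _; rewrite /project subrr mulr0.
Qed.

End Projection.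

Lemma farkas n (a : 'I_n -> I -> R) b : in_cone a b \/ separated a b.
Proof.
elim: n a b => [|n IHn] a b.
  case: (pickP (fun i => b i != 0)) => [i bi_neq0|b0]; last first.
    by left; exists (fun=> 0) => // i; rewrite big_ord0; apply/eqP/negbFE/b0.
  right; exists (fun i => - b i) => [[]//|].
  have -> : dot (fun i => - b i) b = - \sum_i b i * b i.
    by rewrite /dot -sumrN; apply: eq_bigr => j _; rewrite mulNr.
  have bi2_gt0 : 0 < b i * b i by rewrite -expr2 exprn_even_gt0.
  have rest_ge0 : 0 <= \sum_(j | j != i) b j * b j.
    by apply: sumr_ge0 => j _; rewrite -expr2 sqr_ge0.
  rewrite (bigD1 i) //=; lra.
case: (IHn (fun j => a (lift ord0 j)) b) => [/in_cone_tail|[c c_tail_ge0 cb_lt0]].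
  by left.
have [c_a0_ge0|c_a0_lt0] := lerP 0 (dot c (a ord0)).
  by right; exists c => // j; case: (unliftP ord0 j) => [j'|] ->.
case: (IHn (fun j => project c (a ord0) (a (lift ord0 j))) (project c (a ord0) b)).
  by move=> cone; left; apply: in_cone_project cone.
by move=> sep; right; apply: separated_project sep.
Qed.

End Farkas.

Lemma farkas_convex (R : realFieldType) (I J : finType) (a : J -> I -> R) (b : I -> R) :
  (exists mu : J -> R, [/\ forall j, 0 <= mu j, \sum_j mu j = 1 &
                          forall i, b i = \sum_j mu j * a j i]) \/
  (exists c : I -> R, exists c0 : R,
     (forall j, 0 <= c0 + dot c (a j)) /\ c0 + dot c b < 0).
Proof.
(* The extra coordinate, equal to [1], forces [\sum_j mu j = 1]. *)
pose ext (v : I -> R) (o : 'I_1 + I) := if o is inr i then v i else 1.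
have dot_ext c v : dot c (ext v) = c (inl ord0) + dot (fun i => c (inr i)) v.
  by rewrite /dot big_sumType big_ord1 mulr1.
have reindexJ (G : 'I_#|J| -> R) : \sum_k G k = \sum_j G (enum_rank j).
  by rewrite (reindex (@enum_rank J)) //; exact: onW_bij (enum_rank_bij J).
case: (farkas (fun k : 'I_#|J| => ext (a (enum_val k))) (ext b)).
  case=> mu mu_ge0 bE; left; exists (fun j => mu (enum_rank j)).
  split=> [j||i]; first exact: mu_ge0.
    move: (bE (inl ord0)) => /= ->; rewrite reindexJ.
    by apply: eq_bigr => j _; rewrite mulr1.
  move: (bE (inr i)) => /= ->; rewrite reindexJ.
  by apply: eq_bigr => j _; rewrite enum_rankK.
case=> c c_ge0 cb_lt0; right; exists (fun i => c (inr i)), (c (inl ord0)); split; last by rewrite -dot_ext.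
by move=> j; rewrite -dot_ext -(enum_rankK j); apply: c_ge0.
Qed.

(** * Thermomajorization curves *)

Section Clamp.
Variable R : realType.
Implicit Type t : R.

Lemma clamp01_id t : 0 <= t -> t <= 1 -> clamp01 t = t.
Proof. by move=> t_ge0 t_le1; rewrite /clamp01 (max_idPr t_ge0) (min_idPr t_le1). Qed.

Lemma clamp01_le0 t : t <= 0 -> clamp01 t = 0.
Proof. by move=> t_le0; rewrite /clamp01 (max_idPl t_le0) (min_idPr ler01). Qed.

Lemma clamp01_ge1 t : 1 <= t -> clamp01 t = 1.
Proof.
move=> t_ge1; have t_ge0 : 0 <= t := le_trans ler01 t_ge1.
by rewrite /clamp01 (max_idPr t_ge0) (min_idPl t_ge1).
Qed.

Lemma clamp01_ge0 t : 0 <= clamp01 t.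
Proof. by rewrite /clamp01 le_min ler01 le_max lexx. Qed.

Lemma clamp01_le1 t : clamp01 t <= 1.
Proof. by rewrite /clamp01 ge_min lexx. Qed.

Lemma clamp01_le s t : s <= t -> clamp01 s <= clamp01 t.
Proof.
move=> st; rewrite /clamp01 le_min ge_min lexx /=.
by rewrite ge_min ge_max !le_max lexx st !orbT.
Qed.
End Clamp.

Lemma ler_sum_subpred (R : numDomainType) (I : finType) (P Q : pred I) (F : I -> R) :
  (forall i, 0 <= F i) -> (forall i, P i -> Q i) ->
  \sum_(i | P i) F i <= \sum_(i | Q i) F i.
Proof.
move=> F_ge0 PQ; rewrite (big_mkcond P) (big_mkcond Q); apply: ler_sum => i _.
by case: ifPn => [/PQ ->|_]; last case: ifP.
Qed.

Lemma abel_le (R : realDomainType) (c u : nat -> R) n :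
  (forall k, (k.+1 < n)%N -> c k <= c k.+1) ->
  (forall k, (0 < k < n)%N -> \sum_(m < k) u m <= 0) ->
  c n.-1 * \sum_(m < n) u m <= \sum_(m < n) c m * u m.
Proof.
elim: n => [|n IHn] c_incr U_le0; first by rewrite !big_ord0 mulr0.
rewrite !big_ord_recr /=.
have IH : c n.-1 * \sum_(m < n) u m <= \sum_(m < n) c m * u m.
  apply: IHn => [k lt_k|k /andP[k_gt0 lt_k]]; first exact: c_incr (ltnW lt_k).
  by apply: U_le0; rewrite k_gt0 ltnW.
case: (posnP n) => [n0|n_gt0].
  by rewrite n0 !big_ord0 !add0r.
have Un_le0 : \sum_(m < n) u m <= 0 by apply: U_le0; rewrite n_gt0 ltnSn.
have c_le : c n.-1 <= c n by have := c_incr n.-1; rewrite prednK // => /(_ (ltnSn n)).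
have := ler_wnM2r Un_le0 c_le; rewrite mulrDr; lra.
Qed.

Lemma exists_sorting_perm disp (T : orderType disp) d (f : 'I_d -> T) :
  exists pi : {perm 'I_d}, forall i j : 'I_d, (i <= j)%N -> (f (pi i) <= f (pi j))%O.
Proof.
pose leT := fun a b : 'I_d => (f a <= f b)%O.
pose s := sort leT (enum 'I_d).
have s_perm : perm_eq s (enum 'I_d) by rewrite perm_sort.
have size_s : size s = d by rewrite (perm_size s_perm) size_enum_ord.
have s_sorted : sorted leT s by apply: sort_sorted => a b; exact: le_total.
have nth_inj : injective (fun i : 'I_d => nth i s i).
  move=> i j /eqP; rewrite (set_nth_default i j) ?size_s //.
  rewrite nth_uniq ?size_s ?(perm_uniq s_perm) ?enum_uniq // => /eqP; exact: val_inj.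
exists (perm nth_inj) => i j le_ij; rewrite !permE /= (set_nth_default i j) ?size_s //.
have leT_tr : transitive leT by move=> b a c; exact: le_trans.
by apply: (sorted_leq_nth leT_tr (fun a => lexx (f a)) i s_sorted); rewrite ?inE ?size_s.
Qed.

Section Thermomajorization.
Variables (R : realType) (d : nat) (g : 'I_d -> R).
Hypotheses (g_gt0 : forall i, 0 < g i) (g_sum1 : \sum_i g i = 1).
Implicit Types (s w : 'I_d -> R) (pi : {perm 'I_d}).

(* For [g := gibbs beta E i0] these definitions are convertible to those of
   the statement: [xprev] is [cumsum g pi k], [xcum] and [ycum] are
   [cumsum _ pi k.+1], [tmcurve] is [curve], [sorting] is [ratio_sorted], and
   [isTP]/[TPorbit] are [thermal]/[thermal_orbit]. *)
Definition cumsum s pi (n : nat) : R := \sum_(i < d | (i < n)%N) s (pi i).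

Definition curve s pi (t : R) : R :=
  \sum_(k < d) s (pi k) * clamp01 ((t - cumsum g pi k) / g (pi k)).

Definition ratio_sorted s pi : Prop :=
  forall i j : 'I_d, (i <= j)%N -> s (pi j) / g (pi j) <= s (pi i) / g (pi i).

Definition tangent s pi (k : 'I_d) (t : R) : R :=
  cumsum s pi k + s (pi k) * ((t - cumsum g pi k) / g (pi k)).

Lemma exists_ratio_sorted s : exists pi, ratio_sorted s pi.
Proof.
have [pi pi_sorted] := exists_sorting_perm (fun i => - (s i / g i)).
by exists pi => i j /pi_sorted; rewrite lerN2.
Qed.

Lemma dim_gt0 : (0 < d)%N.
Proof.
rewrite lt0n; apply/eqP => d0; have /eqP := g_sum1.
by rewrite big_pred0 1?eq_sym ?oner_eq0 // => -[i]; rewrite d0.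
Qed.

Lemma cumsumS s pi (k : 'I_d) : cumsum s pi k.+1 = cumsum s pi k + s (pi k).
Proof.
rewrite /cumsum (bigD1 k) ?ltnSn //= addrC; congr (_ + _); apply: eq_bigl => i /=.
by rewrite ltnS leq_eqVlt -val_eqE /=; case: ltngtP.
Qed.

Lemma cumsum0 s pi : cumsum s pi 0 = 0.
Proof. by rewrite /cumsum big_pred0. Qed.

Lemma cumsum_full s pi n : (d <= n)%N -> cumsum s pi n = \sum_i s i.
Proof.
move=> le_dn; rewrite [RHS](reindex_inj (@perm_inj _ pi)); apply: eq_bigl => i.
exact: leq_trans (ltn_ord i) le_dn.
Qed.

Lemma cumsum_le s pi m n : (forall i, 0 <= s i) -> (m <= n)%N ->
  cumsum s pi m <= cumsum s pi n.
Proof. by move=> s_ge0 le_mn; apply: ler_sum_subpred => // i /leq_trans; apply. Qed.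

Lemma cumsum_g_ge0 pi n : 0 <= cumsum g pi n.
Proof. by apply: sumr_ge0 => i _; apply: ltW. Qed.

Lemma cumsum_g_le1 pi n : cumsum g pi n <= 1.
Proof.
rewrite -g_sum1 -(cumsum_full g pi (leq_maxr n d)).
by apply: cumsum_le (leq_maxl n d) => i; apply: ltW.
Qed.

Lemma cumsum_g_gt0_lt1 pi n : (0 < n < d)%N -> 0 < cumsum g pi n < 1.
Proof.
case/andP=> n_gt0 n_lt_d; have g_ge0 i : 0 <= g i by apply: ltW.
have d1_lt_d : (d.-1 < d)%N by rewrite prednK ?dim_gt0.
apply/andP; split.
  apply: lt_le_trans (cumsum_le pi g_ge0 n_gt0).
  by rewrite (cumsumS g pi (Ordinal (leq_ltn_trans (leq0n _) n_lt_d))) cumsum0 add0r.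
apply: le_lt_trans (cumsum_le pi g_ge0 (_ : n <= d.-1)%N) _.
  by rewrite -ltnS prednK ?dim_gt0.
have := cumsumS g pi (Ordinal d1_lt_d); rewrite /= prednK ?dim_gt0 // cumsum_full // g_sum1.
by have := g_gt0 (pi (Ordinal d1_lt_d)); lra.
Qed.

Lemma exists_segment pi t : 0 <= t <= 1 ->
  exists k : 'I_d, cumsum g pi k <= t <= cumsum g pi k.+1.
Proof.
case/andP=> t_ge0 t_le1.
have t_last : exists n, t <= cumsum g pi n.+1.
  by exists d; rewrite cumsum_full // g_sum1.
case: (ex_minnP t_last) => n t_le n_min.
have n_lt_d : (n < d)%N.
  have /n_min : t <= cumsum g pi d.-1.+1 by rewrite prednK ?dim_gt0 // cumsum_full // g_sum1.
  by have := dim_gt0; lia.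
exists (Ordinal n_lt_d); rewrite /= t_le andbT.
case: n n_min {t_le n_lt_d} => [|n] n_min; first by rewrite cumsum0.
by rewrite leNgt; apply/negP => /ltW /n_min; rewrite ltnn.
Qed.

Lemma curve_segment s pi (k : 'I_d) t : cumsum g pi k <= t <= cumsum g pi k.+1 ->
  curve s pi t = tangent s pi k t.
Proof.
case/andP=> a_le_t t_le_b; have := cumsumS g pi k; have := g_gt0 (pi k) => gk_gt0 bE.
have g_ge0 i : 0 <= g i by apply: ltW.
have termE (j : 'I_d) : s (pi j) * clamp01 ((t - cumsum g pi j) / g (pi j)) =
    (if (j < k)%N then s (pi j) else 0) +
    (if j == k then s (pi k) * ((t - cumsum g pi k) / g (pi k)) else 0).
  have gj_gt0 := g_gt0 (pi j).
  case: (ltngtP j k) => [j_lt_k|k_lt_j|/val_inj ->]; last first.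
  - by rewrite eqxx add0r clamp01_id // ?divr_ge0 ?ler_pdivrMr ?mul1r; lra.
  - rewrite -val_eqE (gtn_eqF k_lt_j) addr0 clamp01_le0 ?mulr0 // ler_pdivrMr // mul0r.
    by have := cumsum_le pi g_ge0 k_lt_j; lra.
  - rewrite -val_eqE (ltn_eqF j_lt_k) addr0 clamp01_ge1 ?mulr1 // ler_pdivlMr // mul1r.
    by have := cumsum_le pi g_ge0 j_lt_k; rewrite cumsumS; lra.
rewrite /curve (eq_bigr _ (fun j _ => termE j)) big_split /= -!big_mkcond.
by rewrite big_pred1_eq.
Qed.

Lemma curve_gibbs pi t : 0 <= t <= 1 -> curve g pi t = t.
Proof.
by case/(exists_segment pi) => k /curve_segment ->; rewrite /tangent; field; apply: lt0r_neq0.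
Qed.

Lemma curve0 s pi : curve s pi 0 = 0.
Proof.
rewrite /curve big1 // => k _; rewrite clamp01_le0 ?mulr0 // ler_pdivrMr // mul0r.
by have := cumsum_g_ge0 pi k; lra.
Qed.

Lemma curve1 s pi : curve s pi 1 = \sum_i s i.
Proof.
rewrite /curve [RHS](reindex_inj (@perm_inj _ pi)); apply: eq_bigr => k _.
rewrite clamp01_ge1 ?mulr1 // ler_pdivlMr // mul1r.
by have := cumsum_g_le1 pi k.+1; rewrite cumsumS; lra.
Qed.

Definition curve_weight pi (j : 'I_d) (t : R) : R :=
  clamp01 ((t - cumsum g pi ((pi^-1)%g j)) / g j).

Lemma curveE s pi t : curve s pi t = \sum_j s j * curve_weight pi j t.
Proof.
rewrite [RHS](reindex_inj (@perm_inj _ pi)); apply: eq_bigr => k _.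
by rewrite /curve_weight permK.
Qed.

(* Splitting at [k] along the sorted order, the terms before [k] have slope
   at least that of the [k]-th segment and the terms after it at most. *)
Lemma sum_le_tangent s pi (k : 'I_d) w : ratio_sorted s pi -> (forall i, 0 <= w i <= 1) ->
  \sum_i s i * w i <= tangent s pi k (\sum_i g i * w i).
Proof.
move=> s_sorted w01; set mu := s (pi k) / g (pi k).
have gk_neq0 : g (pi k) != 0 by apply: lt0r_neq0.
have -> : tangent s pi k (\sum_i g i * w i) =
    cumsum s pi k + mu * (\sum_i g i * w i - cumsum g pi k).
  by rewrite /tangent /mu; field.
have lhsE : \sum_i s i * w i - mu * \sum_i g i * w i =
    \sum_j (s (pi j) - mu * g (pi j)) * w (pi j).
  rewrite mulr_sumr -sumrB (reindex_inj (@perm_inj _ pi)).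
  by apply: eq_bigr => j _; ring.
have rhsE : cumsum s pi k - mu * cumsum g pi k =
    \sum_(j < d | (j < k)%N) (s (pi j) - mu * g (pi j)).
  by rewrite /cumsum mulr_sumr -sumrB.
suff : \sum_j (s (pi j) - mu * g (pi j)) * w (pi j) <=
       \sum_(j < d | (j < k)%N) (s (pi j) - mu * g (pi j)) by lra.
rewrite (big_mkcond (fun j : 'I_d => (j < k)%N)); apply: ler_sum => j _.
have /andP[w_ge0 w_le1] := w01 (pi j); have gj_gt0 := g_gt0 (pi j).
case: ifPn => [j_lt_k|]; last rewrite -leqNgt => k_le_j.
  have : mu * g (pi j) <= s (pi j) by rewrite -ler_pdivlMr // s_sorted // ltnW.
  by nra.
have : s (pi j) <= mu * g (pi j) by rewrite -ler_pdivrMr // s_sorted.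
by nra.
Qed.

Lemma sum_le_curve s pi w : ratio_sorted s pi -> (forall i, 0 <= w i <= 1) ->
  \sum_i s i * w i <= curve s pi (\sum_i g i * w i).
Proof.
move=> s_sorted w01; have g_ge0 i : 0 <= g i by apply: ltW.
have t01 : 0 <= \sum_i g i * w i <= 1.
  apply/andP; split; [apply: sumr_ge0 | rewrite -g_sum1; apply: ler_sum] => i _;
    by have := g_ge0 i; case/andP: (w01 i); nra.
have [k /curve_segment ->] := exists_segment pi t01.
exact: sum_le_tangent.
Qed.

Lemma curve_le_tangent s pi k t : ratio_sorted s pi -> 0 <= t <= 1 ->
  curve s pi t <= tangent s pi k t.
Proof.
move=> s_sorted t01; rewrite curveE -[X in tangent _ _ _ X](curve_gibbs pi t01) curveE.
by apply: sum_le_tangent => // j; rewrite clamp01_ge0 clamp01_le1.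
Qed.

Lemma curve_concave s pi a b th : ratio_sorted s pi ->
  0 <= a <= 1 -> 0 <= b <= 1 -> 0 <= th <= 1 ->
  (1 - th) * curve s pi a + th * curve s pi b <= curve s pi ((1 - th) * a + th * b).
Proof.
move=> s_sorted a01 b01 /andP[th_ge0 th_le1].
have t01 : 0 <= (1 - th) * a + th * b <= 1.
  by case/andP: a01 => ? ?; case/andP: b01 => ? ?; apply/andP; split; nra.
have [k /curve_segment ->] := exists_segment pi t01.
have gk_neq0 : g (pi k) != 0 by apply: lt0r_neq0.
have -> : tangent s pi k ((1 - th) * a + th * b) =
    (1 - th) * tangent s pi k a + th * tangent s pi k b by rewrite /tangent; field.
by apply: lerD; apply: ler_wpM2l; rewrite ?subr_ge0 // curve_le_tangent.
Qed.

(* Between two consecutive elbows of [r] its curve is a chord, while the curve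
   of [p] is concave; at least one end of the chord lies strictly below the
   curve of [p], unless [t] were [0] or [1]. *)
Lemma curve_lt_of_elbows r p pr sg : (1 < d)%N -> ratio_sorted p sg ->
  \sum_i r i = 1 -> \sum_i p i = 1 ->
  (forall n, (0 < n < d)%N -> cumsum r pr n < curve p sg (cumsum g pr n)) ->
  forall t, 0 < t < 1 -> curve r pr t < curve p sg t.
Proof.
move=> d_gt1 p_sorted r_sum1 p_sum1 elbow_lt t /andP[t_gt0 t_lt1].
have elbow_le n : (n <= d)%N -> cumsum r pr n <= curve p sg (cumsum g pr n).
  case: n => [|n] n_le_d; first by rewrite !cumsum0 curve0.
  have [n_lt|n_eq] := ltnP n.+1 d; first exact/ltW/elbow_lt.
  by rewrite !cumsum_full // g_sum1 curve1 r_sum1 p_sum1.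
have t01 : 0 <= t <= 1 by rewrite !ltW.
have [k seg_k] := exists_segment pr t01; rewrite (curve_segment r seg_k) /tangent.
case/andP: seg_k => a_le_t t_le_b; have gk_gt0 := g_gt0 (pr k).
have bE := cumsumS g pr k; have YbE := cumsumS r pr k.
have Pa := elbow_le k (ltnW (ltn_ord k)); have Pb := elbow_le k.+1 (ltn_ord k).
have Pa_lt (k_gt0 : (0 < k)%N) : cumsum r pr k < curve p sg (cumsum g pr k).
  by apply: elbow_lt; rewrite k_gt0 ltn_ord.
set a := cumsum g pr k in a_le_t bE Pa Pa_lt *.
set b := cumsum g pr k.+1 in t_le_b bE Pb *.
set th := (t - a) / g (pr k).
have th01 : 0 <= th <= 1 by rewrite divr_ge0 ?ler_pdivrMr ?mul1r //=; lra.
have tE : t = (1 - th) * a + th * b by rewrite /th bE; field; apply: lt0r_neq0.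
have a01 : 0 <= a <= 1 by rewrite cumsum_g_ge0 cumsum_g_le1.
have b01 : 0 <= b <= 1 by rewrite cumsum_g_ge0 cumsum_g_le1.
have := curve_concave p_sorted a01 b01 th01; rewrite -tE; apply: lt_le_trans.
case/andP: th01 => th_ge0 th_le1.
have [k1_lt_d|d_le_k1] := ltnP k.+1 d.
  have [th_gt0|th_le0] := ltrP 0 th.
    by have := elbow_lt k.+1 k1_lt_d; nra.
  have k_gt0 : (0 < k)%N.
    by rewrite lt0n; apply: contraTneq t_gt0 => k0; rewrite tE /a k0 cumsum0; nra.
  by have := Pa_lt k_gt0; nra.
have k_gt0 : (0 < k)%N by move: d_gt1 d_le_k1; clear; lia.
have th_lt1 : th < 1.
  have b1 : b = 1 by rewrite /b cumsum_full.
  by rewrite ltr_pdivrMr // mul1r; lra.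
by have := Pa_lt k_gt0; nra.
Qed.

(** * Thermal processes *)

Definition thermal (T : 'M[R]_d) : Prop :=
  (forall i j, 0 <= T i j) /\ (forall j, \sum_i T i j = 1) /\
  T *m \col_i g i = \col_i g i.

Definition thermal_orbit (p : 'cV[R]_d) : set 'cV[R]_d :=
  [set r | exists T, thermal T /\ r = T *m p].

Lemma thermal_state T p : thermal T -> isState p -> isState (T *m p).
Proof.
case=> T_ge0 [T_sum1 _] [p_ge0 p_sum1]; split.
  by move=> i; rewrite mxE; apply: sumr_ge0 => j _; apply: mulr_ge0.
rewrite -p_sum1 (eq_bigr (fun i => \sum_j T i j * p j 0)) => [|i _]; last by rewrite mxE.
by rewrite exchange_big; apply: eq_bigr => j _; rewrite -mulr_suml T_sum1 mul1r.
Qed.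

Lemma thermal1 : thermal 1%:M.
Proof.
split; [|split]; last by rewrite mul1mx.
  by move=> i j; rewrite mxE ler0n.
move=> j; rewrite (bigD1 j) //= mxE eqxx big1 ?addr0 // => i /negbTE ij.
by rewrite mxE ij.
Qed.

Lemma thermal_convex (J : finType) (A : J -> 'M[R]_d) (mu : J -> R) :
  (forall j, thermal (A j)) -> (forall j, 0 <= mu j) -> \sum_j mu j = 1 ->
  thermal (\sum_j mu j *: A j).
Proof.
move=> A_thermal mu_ge0 mu_sum1; split; [|split].
- move=> i k; rewrite summxE; apply: sumr_ge0 => j _; rewrite mxE.
  by apply: mulr_ge0 => //; case: (A_thermal j).
- move=> k; under eq_bigr do rewrite summxE.
  rewrite exchange_big -mu_sum1; apply: eq_bigr => j _.
  under eq_bigr do rewrite mxE.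
  by rewrite -mulr_sumr; case: (A_thermal j) => _ [-> _]; rewrite mulr1.
- rewrite mulmx_suml (eq_bigr (fun j => mu j *: \col_i g i)).
    by rewrite -scaler_suml mu_sum1 scale1r.
  by move=> j _; rewrite -scalemxAl; case: (A_thermal j) => _ [_ ->].
Qed.

Lemma cumsum_thermal_le_curve T (v : 'cV[R]_d) sg pi n :
  thermal T -> ratio_sorted (fun i => v i 0) sg ->
  cumsum (fun i => (T *m v) i 0) pi n <= curve (fun i => v i 0) sg (cumsum g pi n).
Proof.
case=> T_ge0 [T_sum1 Tg] v_sorted; pose w j := \sum_(i < d | (i < n)%N) T (pi i) j.
have cumsumE (u : 'cV[R]_d) : cumsum (fun i => (T *m u) i 0) pi n = \sum_j u j 0 * w j.
  rewrite /cumsum (eq_bigr (fun i => \sum_j T (pi i) j * u j 0)) => [|i _]; last first.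
    by rewrite mxE.
  rewrite exchange_big; apply: eq_bigr => j _; rewrite mulr_sumr.
  by apply: eq_bigr => i _; rewrite mulrC.
have w01 j : 0 <= w j <= 1.
  rewrite sumr_ge0 //= -(T_sum1 j) (reindex_inj (@perm_inj _ pi)).
  exact: ler_sum_subpred.
have -> : cumsum g pi n = \sum_j g j * w j.
  transitivity (cumsum (fun i => (T *m \col_i g i) i 0) pi n).
    by rewrite Tg; apply: eq_bigr => i _; rewrite mxE.
  by rewrite cumsumE; apply: eq_bigr => j _; rewrite mxE.
rewrite cumsumE; exact: sum_le_curve.
Qed.

Lemma curve_weight_le pi j x y : x <= y -> curve_weight pi j x <= curve_weight pi j y.
Proof.
by move=> le_xy; apply: clamp01_le; rewrite ler_pM2r ?invr_gt0 // lerD2r.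
Qed.

Lemma curve_weight0 pi j : curve_weight pi j 0 = 0.
Proof.
rewrite /curve_weight clamp01_le0 // ler_pdivrMr // mul0r.
by have := cumsum_g_ge0 pi ((pi^-1)%g j); lra.
Qed.

Lemma curve_weight1 pi j : curve_weight pi j 1 = 1.
Proof.
rewrite /curve_weight clamp01_ge1 // ler_pdivlMr // mul1r.
by have := cumsum_g_le1 pi ((pi^-1)%g j).+1; rewrite cumsumS permKV; lra.
Qed.

Lemma cumsum_telescope (f : nat -> R) pi n : (n <= d)%N ->
  cumsum (fun i => f ((pi^-1)%g i).+1 - f ((pi^-1)%g i)) pi n = f n - f 0%N.
Proof.
move=> le_nd; rewrite /cumsum (eq_bigr (fun i : 'I_d => f i.+1 - f i)) => [|i _]; last first.
  by rewrite permK.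
rewrite -(big_ord_widen _ (fun i => f i.+1 - f i) le_nd).
by rewrite -(big_mkord xpredT (fun i => f i.+1 - f i)) telescope_sumr.
Qed.

(* Entry [(i, j)] is the fraction of the segment of [j] along [sg] that
   overlaps the segment of [i] along [pi], both orderings tiling [0, 1] by
   segments of lengths [g]. *)
Definition extremal sg pi : 'M[R]_d :=
  \matrix_(i, j) (curve_weight sg j (cumsum g pi ((pi^-1)%g i).+1) -
                  curve_weight sg j (cumsum g pi ((pi^-1)%g i))).

Lemma extremal_mul sg pi (v : 'cV[R]_d) i :
  (extremal sg pi *m v) i 0 =
  curve (fun j => v j 0) sg (cumsum g pi ((pi^-1)%g i).+1) -
  curve (fun j => v j 0) sg (cumsum g pi ((pi^-1)%g i)).
Proof. by rewrite mxE !curveE -sumrB; apply: eq_bigr => j _; rewrite mxE; ring. Qed.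

Lemma cumsum_extremal sg pi (v : 'cV[R]_d) n : (n <= d)%N ->
  cumsum (fun i => (extremal sg pi *m v) i 0) pi n =
  curve (fun j => v j 0) sg (cumsum g pi n).
Proof.
move=> le_nd.
have := cumsum_telescope (fun m => curve (fun j => v j 0) sg (cumsum g pi m)) pi le_nd.
by rewrite cumsum0 curve0 subr0 => <-; apply: eq_bigr => i _; rewrite extremal_mul.
Qed.

Lemma extremal_thermal sg pi : thermal (extremal sg pi).
Proof.
split; [|split].
- by move=> i j; rewrite mxE subr_ge0 curve_weight_le // cumsumS lerDl ltW.
- move=> j; rewrite -(cumsum_full _ pi (leqnn d)).
  have := cumsum_telescope (fun m => curve_weight sg j (cumsum g pi m)) pi (leqnn d).
  rewrite (cumsum_full g pi (leqnn d)) g_sum1 cumsum0 curve_weight1 curve_weight0 subr0 => <-.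
  by apply: eq_bigr => i _; rewrite mxE.
- apply/matrixP => i k; rewrite ord1 extremal_mul mxE.
  under eq_fun do rewrite mxE.
  by rewrite !curve_gibbs ?cumsum_g_ge0 ?cumsum_g_le1 // cumsumS permKV addrC addKr.
Qed.

Lemma cumsum_abel (c u : 'I_d -> R) pi :
  (forall i j : 'I_d, (i <= j)%N -> c (pi i) <= c (pi j)) ->
  (forall n, (0 < n < d)%N -> cumsum u pi n <= 0) -> \sum_i u i = 0 ->
  0 <= \sum_i c i * u i.
Proof.
move=> c_sorted U_le0 u_sum0; pose i0 := Ordinal dim_gt0.
pose cc m := c (pi (insubd i0 m)); pose uu m := u (pi (insubd i0 m)).
have cumsumE n : (n <= d)%N -> \sum_(m < n) uu m = cumsum u pi n.
  move=> le_nd; rewrite (big_ord_widen _ uu le_nd).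
  by apply: eq_bigr => i _; rewrite /uu valKd.
have -> : \sum_i c i * u i = \sum_(m < d) cc m * uu m.
  rewrite (reindex_inj (@perm_inj _ pi)); apply: eq_bigr => i _.
  by rewrite /cc /uu valKd.
have := @abel_le _ cc uu d; rewrite cumsumE // cumsum_full // u_sum0 mulr0; apply.
  by move=> k lt_k1; apply: c_sorted; rewrite !val_insubd lt_k1 (ltnW lt_k1).
move=> k /andP[k_gt0 lt_k]; rewrite cumsumE; last exact: ltnW.
by apply: U_le0; rewrite k_gt0.
Qed.

(* By Farkas, [x] is a convex combination of the extremal images of [p]
   unless an affine functional separates them; evaluating it on the extremal
   image along the order of its coefficients contradicts the Abel inequality. *)
Lemma thermal_orbit_of_cumsum_le (p x : 'cV[R]_d) sg :
  \sum_i x i 0 = \sum_i p i 0 ->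
  (forall pi n, (0 < n < d)%N ->
     cumsum (fun i => x i 0) pi n <= curve (fun i => p i 0) sg (cumsum g pi n)) ->
  thermal_orbit p x.
Proof.
move=> x_sum x_below.
case: (farkas_convex (fun pi i => (extremal sg pi *m p) i 0) (fun i => x i 0)).
  case=> mu [mu_ge0 mu_sum1 xE]; exists (\sum_pi mu pi *: extremal sg pi).
  split; first exact: thermal_convex (fun pi => extremal_thermal sg pi) mu_ge0 mu_sum1.
  apply/matrixP => i k; rewrite ord1 xE mulmx_suml summxE.
  by apply: eq_bigr => pi _; rewrite -scalemxAl [RHS]mxE.
case=> c [c0 [c_ge0 cx_lt0]]; exfalso.
have [pi c_sorted] := exists_sorting_perm c.
pose q := extremal sg pi *m p.
have q_sum : \sum_i q i 0 = \sum_i p i 0.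
  rewrite -[LHS](cumsum_full _ pi (leqnn d)) /q cumsum_extremal //.
  by rewrite (cumsum_full g pi (leqnn d)) g_sum1 curve1.
have U_le0 n : (0 < n < d)%N -> cumsum (fun i => x i 0 - q i 0) pi n <= 0.
  case/andP=> n_gt0 n_lt_d; rewrite /cumsum sumrB subr_le0.
  rewrite -/(cumsum (fun i => q i 0) pi n) /q cumsum_extremal ?(ltnW n_lt_d) //.
  by apply: x_below; rewrite n_gt0.
have u_sum0 : \sum_i (x i 0 - q i 0) = 0 by rewrite sumrB x_sum q_sum subrr.
have := cumsum_abel c_sorted U_le0 u_sum0; have := c_ge0 pi; move: cx_lt0.
rewrite /dot -/q.
have -> : \sum_i c i * (x i 0 - q i 0) = \sum_i c i * x i 0 - \sum_i c i * q i 0.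
  by rewrite -sumrB; apply: eq_bigr => i _; rewrite mulrBr.
lra.
Qed.

Lemma cumsum_indicator pi (m : 'I_d) n :
  cumsum (fun i => (i == pi m)%:R) pi n = (m < n)%:R.
Proof.
rewrite /cumsum (eq_bigr (fun i : 'I_d => (i == m)%:R)) => [|i _]; last first.
  by rewrite (inj_eq perm_inj).
case: ltnP => [m_lt_n|n_le_m].
  by rewrite (bigD1 m) //= eqxx big1 ?addr0 // => i /andP[_ /negbTE ->].
rewrite big1 // => i i_lt_n; case: eqP => // i_m.
by move: i_lt_n; rewrite i_m ltnNge n_le_m.
Qed.

Lemma rel_interior_state p r : isState p ->
  rel_interior (thermal_orbit p) r -> isState r.
Proof.
move=> p_state [r_sum1 [eps eps_gt0 ball_sub]].
have [T [T_thermal ->]] : thermal_orbit p r.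
  by apply: ball_sub => // i; rewrite subrr normr0.
exact: thermal_state.
Qed.

(* Moving mass [eps / 2] from the last to the first position along [pi] stays
   in the orbit, raises every intermediate elbow by [eps / 2], and no element of
   the orbit rises above the curve of [p]. *)
Lemma rel_interior_elbow_lt p r pi sg :
  rel_interior (thermal_orbit p) r -> ratio_sorted (fun i => p i 0) sg ->
  forall n, (0 < n < d)%N ->
    cumsum (fun i => r i 0) pi n < curve (fun i => p i 0) sg (cumsum g pi n).
Proof.
move=> [r_sum1 [eps eps_gt0 ball_sub]] p_sorted n /andP[n_gt0 n_lt_d].
have d1_lt_d : (d.-1 < d)%N by rewrite ltn_predL dim_gt0.
pose i0 : 'I_d := Ordinal dim_gt0; pose i1 : 'I_d := Ordinal d1_lt_d.
pose de := eps / 2; have de_gt0 : 0 < de by rewrite divr_gt0.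
pose x : 'cV[R]_d := \col_i (r i 0 + de * ((i == pi i0)%:R - (i == pi i1)%:R)).
have xE i : x i 0 = r i 0 + de * ((i == pi i0)%:R - (i == pi i1)%:R) by rewrite mxE.
have cumsum_xE m : cumsum (fun i => x i 0) pi m = cumsum (fun i => r i 0) pi m +
    de * (cumsum (fun i => (i == pi i0)%:R) pi m - cumsum (fun i => (i == pi i1)%:R) pi m).
  by rewrite /cumsum (eq_bigr _ (fun i _ => xE (pi i))) big_split /= -mulr_sumr sumrB.
have x_sum1 : \sum_i x i 0 = 1.
  rewrite -(cumsum_full _ pi (leqnn d)) cumsum_xE !cumsum_indicator !ltn_ord subrr mulr0.
  by rewrite addr0 cumsum_full.
have x_near i : `|x i 0 - r i 0| < eps.
  rewrite xE addrC addKr normrM gtr0_norm //.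
  have : `|(i == pi i0)%:R - (i == pi i1)%:R : R| <= 1.
    by do 2!case: eqP => _; rewrite ?subrr ?subr0 ?sub0r ?normrN ?normr0 ?normr1.
  by have := normr_ge0 ((i == pi i0)%:R - (i == pi i1)%:R : R); rewrite /de; nra.
have [T [T_thermal xT]] := ball_sub x x_sum1 x_near.
have := cumsum_thermal_le_curve pi n T_thermal p_sorted; rewrite -xT cumsum_xE.
have i1_ge_n : (n <= i1)%N by rewrite /=; move: n_lt_d; clear; lia.
by rewrite !cumsum_indicator n_gt0 ltnNge i1_ge_n subr0 mulr1; lra.
Qed.

(* Strict elbows put the curve of [r] strictly below that of [p] on (0, 1),
   hence every prefix sum of [r] strictly below it; a uniform margin over the
   finitely many prefixes survives small perturbations. *)
Lemma elbow_lt_rel_interior p r pr sg : (1 < d)%N -> isState p -> isState r ->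
  ratio_sorted (fun i => r i 0) pr -> ratio_sorted (fun i => p i 0) sg ->
  (forall n, (0 < n < d)%N ->
     cumsum (fun i => r i 0) pr n < curve (fun i => p i 0) sg (cumsum g pr n)) ->
  rel_interior (thermal_orbit p) r.
Proof.
move=> d_gt1 [_ p_sum1] [_ r_sum1] r_sorted p_sorted elbow_lt.
have curve_lt := curve_lt_of_elbows d_gt1 p_sorted r_sum1 p_sum1 elbow_lt.
pose gap (q : {perm 'I_d} * 'I_d) :=
  curve (fun i => p i 0) sg (cumsum g q.1 q.2) - cumsum (fun i => r i 0) q.1 q.2.
have gap_gt0 (q : {perm 'I_d} * 'I_d) : (0 < q.2)%N -> 0 < gap q.
  move=> q2_gt0; rewrite subr_gt0.
  have := cumsum_thermal_le_curve q.1 q.2 thermal1 r_sorted; rewrite mul1mx.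
  by move/le_lt_trans; apply; apply/curve_lt/cumsum_g_gt0_lt1; rewrite q2_gt0 ltn_ord.
pose e := \big[Num.min/1]_(q : {perm 'I_d} * 'I_d | (0 < q.2)%N) gap q.
have e_gt0 : 0 < e by apply: lt_bigmin => //; exact: ltr01.
have d_gt0 : 0 < d%:R :> R by rewrite ltr0n ltnW.
split => //; exists (e / d%:R) => [|x x_sum1 x_near]; first exact: divr_gt0.
apply: (thermal_orbit_of_cumsum_le (sg := sg)); first by rewrite x_sum1 p_sum1.
move=> pi n /andP[n_gt0 n_lt_d].
have : e <= gap (pi, Ordinal n_lt_d) by apply: bigmin_le_cond.
suff : cumsum (fun i => x i 0) pi n - cumsum (fun i => r i 0) pi n <= e.
  by rewrite /gap /=; lra.
apply: le_trans (_ : _ <= \sum_(i < d | (i < n)%N) (e / d%:R)) _.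
  rewrite /cumsum -sumrB; apply: ler_sum => i _.
  by have := x_near (pi i); rewrite ltr_norml; lra.
apply: le_trans (ler_sum_subpred (Q := xpredT) _ _) _ => // [i|]; first exact/ltW/divr_gt0.
by rewrite sumr_const card_ord -[X in X <= _]mulr_natr divfK ?lt0r_neq0.
Qed.

End Thermomajorization.

Lemma partition_fn_gt0 (R : realType) d beta (E : 'I_d -> R) i0 :
  0 < \sum_j qfac beta E j i0.
Proof.
rewrite (bigD1 i0) //=; have := expR_gt0 (- beta * (E i0 - E i0)).
have : 0 <= \sum_(j | j != i0) qfac beta E j i0.
  by apply: sumr_ge0 => j _; apply/ltW/expR_gt0.
rewrite /qfac; lra.
Qed.

Lemma gibbs_gt0 (R : realType) d beta (E : 'I_d -> R) i0 i : 0 < gibbs beta E i0 i.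
Proof. by rewrite /gibbs divr_gt0 ?expR_gt0 ?partition_fn_gt0. Qed.

Lemma gibbs_sum1 (R : realType) d beta (E : 'I_d -> R) i0 : \sum_i gibbs beta E i0 i = 1.
Proof. by rewrite /gibbs -mulr_suml divff // lt0r_neq0 ?partition_fn_gt0. Qed.

Theorem mainTheorem5 (R : realType) (d : nat) (hd : (2 <= d)%N)
  (beta : R) (hbeta : 0 < beta) (E : 'I_d -> R) (i0 : 'I_d)
  (hi0 : nat_of_ord i0 = 0%N) (hE0 : E i0 = 0) (hEinj : injective E)
  (p : 'cV[R]_d) (hp : isState p) (r : 'cV[R]_d) :
  rel_interior (TPorbit beta E i0 p) r <->
  (isState r /\
   forall (pi sigma : {perm 'I_d}),
     sorting beta E i0 r pi -> sorting beta E i0 p sigma ->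
     forall k : 'I_d, (k <= d - 2)%N ->
       ycum r pi k < tmcurve beta E i0 p sigma (xcum beta E i0 pi k)).
Proof.
have g_gt0 := gibbs_gt0 beta E i0; have g_sum1 := gibbs_sum1 beta E i0.
have elbow_index (k : 'I_d) : (k <= d - 2)%N = (0 < k.+1 < d)%N.
  by move: (ltn_ord k) hd; lia.
split=> [r_int|[r_state elbows]].
  split=> [|pi sg _ p_sorted k]; first exact: rel_interior_state r_int.
  by rewrite elbow_index; exact: rel_interior_elbow_lt r_int p_sorted k.+1.
have [pr r_sorted] := exists_ratio_sorted (gibbs beta E i0) (fun i => r i 0).
have [sg p_sorted] := exists_ratio_sorted (gibbs beta E i0) (fun i => p i 0).
apply: (elbow_lt_rel_interior g_gt0 g_sum1 hd hp r_state r_sorted p_sorted).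
move=> n /andP[n_gt0 n_lt_d].
have n1_lt_d : (n.-1 < d)%N by rewrite (leq_ltn_trans (leq_pred n) n_lt_d).
rewrite -(prednK n_gt0); apply: (elbows pr sg r_sorted p_sorted (Ordinal n1_lt_d)).
by rewrite elbow_index /= prednK.
Qed.
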